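(* Consider the setting described in the context. If $Q_{t,k}\ge0$, $R_{t,k}>0$ and $G_t\ge0$ for all $k\in\mathbb{T}_t$, $t\in\mathbb{T}$, then Problem (LQ) admits a unique linear feedback equilibrium strategy $\Phi$.
   Context: Let $N$ be a positive integer, $\mathbb{T}=\{0,1,\dots,N-1\}$, $\mathbb{T}_t=\{t,\dots,N-1\}$. On a probability space $(\Omega,\mathcal{F},P)$, $\{w_k\}$ is a scalar martingale difference sequence with $\mathbb{E}[w_{k+1}\mid\mathcal{F}_k]=0$ and $\mathbb{E}[w_{k+1}^2\mid\mathcal{F}_k]=1$ for $k\ge0$, where $\mathcal{F}_k=\sigma\{x_0,w_l,\ l=0,\dots,k\}$ and $\mathcal{F}_{-1}=\{\emptyset,\Omega\}$. $L^2_{\mathcal{F}}(\mathbb{T}_t;\mathbb{R}^m)$ is the set of $\mathbb{R}^m$-valued processes $\{\nu_k,k\in\mathbb{T}_t\}$ with each $\nu_k$ $\mathcal{F}_{k-1}$-measurable and $\sum_k\mathbb{E}|\nu_k|^2<\infty$; $L^2_{\mathcal{F}}(k;\mathcal{H})$ is the set of square-integrable $\mathcal{F}_{k-1}$-measurable $\mathcal{H}$-valued random variables. For each $t\in\mathbb{T}$, $k\in\mathbb{T}_t$, let $A_{t,k},C_{t,k}\in\mathbb{R}^{n\times n}$, $B_{t,k},D_{t,k}\in\mathbb{R}^{n\times m}$ be deterministic and $Q_{t,k}\in\mathbb{R}^{n\times n}$, $R_{t,k}\in\mathbb{R}^{m\times m}$, $G_t\in\mathbb{R}^{n\times n}$ deterministic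 symmetric. For $t\in\mathbb{T}$, $y\in L^2_{\mathcal{F}}(t;\mathbb{R}^n)$, $u\in L^2_{\mathcal{F}}(\mathbb{T}_t;\mathbb{R}^m)$, the state $X^t$ solves $X^t_{k+1}=A_{t,k}X^t_k+B_{t,k}u_k+(C_{t,k}X^t_k+D_{t,k}u_k)w_k$, $X^t_t=y$, and $J(t,y;u)=\sum_{k=t}^{N-1}\mathbb{E}[(X^t_k)^TQ_{t,k}X^t_k+u_k^TR_{t,k}u_k]+\mathbb{E}[(X^t_N)^TG_tX^t_N]$ (Problem (LQ) is to minimize it). $\Phi=\{\Phi_0,\dots,\Phi_{N-1}\}$, $\Phi_t\in\mathbb{R}^{m\times n}$, is a linear feedback equilibrium strategy of Problem (LQ) if for every $(t,x)\in\mathbb{T}\times\mathbb{R}^n$, $k\in\mathbb{T}_t$ and $u_k\in L^2_{\mathcal{F}}(k;\mathbb{R}^m)$, $$J\big(k,X^{t,x,*}_k;(\Phi_\ell X^{k,\Phi}_\ell)_{\ell\in\mathbb{T}_k}\big)\le J\big(k,X^{t,x,*}_k;(u_k,(\Phi_\ell X^{k,u_k,\Phi}_\ell)_{\ell\in\mathbb{T}_{k+1}})\big),$$ where $X^{t,x,*}_{k+1}=(A_{k,k}+B_{k,k}\Phi_k)X^{t,x,*}_k+(C_{k,k}+D_{k,k}\Phi_k)X^{t,x,*}_kw_k$, $X^{t,x,*}_t=x$; $X^{k,\Phi}_{\ell+1}=(A_{k,\ell}+B_{k,\ell}\Phi_\ell)X^{k,\Phi}_\ell+(C_{k,\ell}+D_{k,\ell}\Phi_\ell)X^{k,\Phi}_\ell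 w_\ell$ ($\ell\in\mathbb{T}_k$), $X^{k,\Phi}_k=X^{t,x,*}_k$; and $X^{k,u_k,\Phi}_k=X^{t,x,*}_k$, $X^{k,u_k,\Phi}_{k+1}=A_{k,k}X^{k,u_k,\Phi}_k+B_{k,k}u_k+(C_{k,k}X^{k,u_k,\Phi}_k+D_{k,k}u_k)w_k$, $X^{k,u_k,\Phi}_{\ell+1}=(A_{k,\ell}+B_{k,\ell}\Phi_\ell)X^{k,u_k,\Phi}_\ell+(C_{k,\ell}+D_{k,\ell}\Phi_\ell)X^{k,u_k,\Phi}_\ell w_\ell$ for $\ell\in\mathbb{T}_{k+1}$. *)

From HB Require Import structures.
From mathcomp Require Import all_boot all_order all_algebra.
From mathcomp Require Import all_classical all_reals all_analysis.

Set Implicit Arguments.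
Unset Strict Implicit.
Unset Printing Implicit Defensive.

Import Order.TTheory GRing.Theory Num.Theory.
Local Open Scope classical_set_scope.
Local Open Scope ring_scope.

Section LQDefs.
Context {d : measure_display} {T : measurableType d} {R : realType}.

Definition qf (p : nat) (M : 'M[R]_p) (v : 'cV[R]_p) : R := (v^T *m M *m v) 0 0.

Definition psd (p : nat) (M : 'M[R]_p) : Prop :=
  M^T = M /\ forall v : 'cV[R]_p, 0 <= qf M v.
Definition pd (p : nat) (M : 'M[R]_p) : Prop :=
  M^T = M /\ forall v : 'cV[R]_p, v != 0 -> 0 < qf M v.

(** Generators of F_{k-1} = sigma{x_0, w_l, l = 0..k-1}; F_{-1} = {emptyset, Omega}. *)
Definition gen_prev (n : nat) (x0 : T -> 'cV[R]_n) (w : nat -> T -> R) (k : nat)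
  : set (set T) :=
  [set A | (exists (i : 'I_n) (B : set R),
              [/\ (0 < k)%N, measurable B & A = (fun o => x0 o i 0) @^-1` B])
        \/ (exists (l : nat) (B : set R),
              [/\ (l < k)%N, measurable B & A = w l @^-1` B])].

Definition Fprev (n : nat) (x0 : T -> 'cV[R]_n) (w : nat -> T -> R) (k : nat)
  : set (set T) := <<s gen_prev x0 w k >>.

Definition Fmeas (n : nat) (x0 : T -> 'cV[R]_n) (w : nat -> T -> R) (k : nat)
  (Z : T -> R) : Prop :=
  forall B : set R, measurable B -> Fprev x0 w k (Z @^-1` B).
Definition Fmeas_vec (n p : nat) (x0 : T -> 'cV[R]_n) (w : nat -> T -> R) (k : nat)
  (Z : T -> 'cV[R]_p) : Prop :=
  forall i : 'I_p, Fmeas x0 w k (fun o => Z o i 0).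

Definition L2vec (P : probability T R) (p : nat) (Z : T -> 'cV[R]_p) : Prop :=
  forall i : 'I_p, P.-integrable setT (fun o => ((Z o i 0) ^+ 2)%:E).

Definition L2F_k (P : probability T R) (n m : nat) (x0 : T -> 'cV[R]_n)
  (w : nat -> T -> R) (k : nat) (u : T -> 'cV[R]_m) : Prop :=
  Fmeas_vec x0 w k u /\ L2vec P u.

(** {w_k} martingale difference sequence: E[w_k | F_{k-1}] = 0 and
    E[w_k^2 | F_{k-1}] = 1 for all k >= 0 (conditional expectations
    expressed through their defining property on the sets of F_{k-1}). *)
Definition mds (P : probability T R) (n : nat) (x0 : T -> 'cV[R]_n)
  (w : nat -> T -> R) : Prop :=
  forall k : nat,
  [/\ measurable_fun setT (w k),
      P.-integrable setT (fun o => (w k o)%:E),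
      (forall A, Fprev x0 w k A -> (\int[P]_(o in A) (w k o)%:E = 0)%E),
      P.-integrable setT (fun o => ((w k o) ^+ 2)%:E)
    & (forall A, Fprev x0 w k A -> (\int[P]_(o in A) ((w k o) ^+ 2)%:E = P A)%E)].

(** State recursion started at time s from y, with coefficients
    Ac l, Bc l, Cc l, Dc l at time l and control u_l = c l X_l omega.
    [path ... j] is X_{s+j}. *)
Fixpoint path (n m : nat) (Ac Cc : nat -> 'M[R]_n) (Bc Dc : nat -> 'M[R]_(n, m))
  (w : nat -> T -> R) (s : nat) (y : T -> 'cV[R]_n)
  (c : nat -> 'cV[R]_n -> T -> 'cV[R]_m) (j : nat) : T -> 'cV[R]_n :=
  match j with
  | 0 => y
  | j'.+1 => fun o =>
      let x := path Ac Cc Bc Dc w s y c j' o in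
      let l := (s + j')%N in
      let u := c l x o in
      Ac l *m x + Bc l *m u + w l o *: (Cc l *m x + Dc l *m u)
  end.

Definition Jcost (P : probability T R) (n m N : nat)
  (A C : nat -> nat -> 'M[R]_n) (B D : nat -> nat -> 'M[R]_(n, m))
  (Q : nat -> nat -> 'M[R]_n) (Rm : nat -> nat -> 'M[R]_m) (G : nat -> 'M[R]_n)
  (w : nat -> T -> R) (s : nat) (y : T -> 'cV[R]_n)
  (c : nat -> 'cV[R]_n -> T -> 'cV[R]_m) : \bar R :=
  let X := path (A s) (C s) (B s) (D s) w s y c in
  ((\sum_(j < N - s)
      \int[P]_o ((qf (Q s (s + j)%N) (X j o)
                 + qf (Rm s (s + j)%N) (c (s + j)%N (X j o) o))%:E))
   + \int[P]_o (qf (G s) (X (N - s)%N o))%:E)%E.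

Definition equilibrium (P : probability T R) (n m N : nat) (x0 : T -> 'cV[R]_n)
  (w : nat -> T -> R)
  (A C : nat -> nat -> 'M[R]_n) (B D : nat -> nat -> 'M[R]_(n, m))
  (Q : nat -> nat -> 'M[R]_n) (Rm : nat -> nat -> 'M[R]_m) (G : nat -> 'M[R]_n)
  (Phi : nat -> 'M[R]_(m, n)) : Prop :=
  forall (t : nat) (x : 'cV[R]_n), (t < N)%N ->
  forall k : nat, (t <= k < N)%N ->
  forall u : T -> 'cV[R]_m, L2F_k P x0 w k u ->
  let Xstar := path (fun l => A l l) (fun l => C l l) (fun l => B l l)
                    (fun l => D l l) w t (fun _ => x)
                    (fun l z _ => Phi l *m z) (k - t)%N in
  (Jcost P N A C B D Q Rm G w k Xstar (fun l z _ => Phi l *m z)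
   <= Jcost P N A C B D Q Rm G w k Xstar
        (fun l z o => if l == k then u o else Phi l *m z))%E.

End LQDefs.

(* Fix a time s and a strategy Phi used after s. Since w_l has zero conditional
   mean and unit conditional variance given F_{l-1}, for F_{l-1}-measurable a, b
   and symmetric V one has E[(a + w_l b)^T V (a + w_l b)] = E[a^T V a] + E[b^T V b].
   Summing the cost backwards from N, the cost at time s of applying v at s and
   Phi afterwards is E[f(y, v)] with
     f(y, v) = y^T Q y + v^T R v + (A y + B v)^T V (A y + B v)
               + (C y + D v)^T V (C y + D v),
   V the value matrix at s + 1 of the Lyapunov recursion driven by Phi.
   Completing the square, f(y, v) = f(y, F y) + (v - F y)^T H (v - F y) with
   H = R + B^T V B + D^T V D > 0 and F = - H^-1 (B^T V A + D^T V C). Hence Phi is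
   an equilibrium iff Phi_s = F_s(Phi) for every s; as F_s only depends on
   Phi_{s+1}, ..., Phi_{N-1}, this triangular system has exactly one solution,
   obtained backwards from N - 1. *)

From Pilot Require Import Defs.
From HB Require Import structures.
From mathcomp Require Import all_boot all_order all_algebra.
From mathcomp Require Import all_classical all_reals all_analysis.
From mathcomp Require Import measurable_realfun lra ring zify.

Set Implicit Arguments.
Unset Strict Implicit.
Unset Printing Implicit Defensive.

Import Order.TTheory GRing.Theory Num.Theory.
Local Open Scope classical_set_scope.
Local Open Scope ring_scope.

Section QuadraticForm.
Variable R : realType.

Definition bf (p : nat) (M : 'M[R]_p) (a b : 'cV[R]_p) : R := (a^T *m M *m b) 0 0.

Lemma addmxE p q (X Y : 'M[R]_(p, q)) i j : (X + Y) i j = X i j + Y i j.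
Proof. by rewrite mxE. Qed.

Lemma bf_sum p (M : 'M[R]_p) a b :
  bf M a b = \sum_j \sum_i M i j * (a i 0 * b j 0).
Proof.
rewrite /bf mxE; apply: eq_bigr => j _; rewrite mxE mulr_suml.
by apply: eq_bigr => i _; rewrite !mxE; ring.
Qed.

Lemma qfDl p (M1 M2 : 'M[R]_p) v : qf (M1 + M2) v = qf M1 v + qf M2 v.
Proof. by rewrite /qf mulmxDr mulmxDl mxE. Qed.

Lemma qf_congr p q (K : 'M[R]_(p, q)) (M : 'M[R]_p) v :
  qf (K^T *m M *m K) v = qf M (K *m v).
Proof. by rewrite /qf trmx_mul !mulmxA. Qed.

Lemma qfD p (M : 'M[R]_p) a b : M^T = M ->
  qf M (a + b) = qf M a + qf M b + 2 * bf M a b.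
Proof.
move=> sM; have bfC : (b^T *m M *m a) 0 0 = bf M a b.
  have -> : b^T *m M *m a = (a^T *m M *m b)^T by rewrite !trmx_mul trmxK sM mulmxA.
  by rewrite mxE.
rewrite /qf [(a + b)^T]linearD /= !mulmxDl !mulmxDr !addmxE bfC /bf; lra.
Qed.

Lemma qfZ p (M : 'M[R]_p) c a : qf M (c *: a) = c ^+ 2 * qf M a.
Proof.
by rewrite /qf [(c *: a)^T]linearZ /= -!scalemxAl -scalemxAr !mxE mulrA -expr2.
Qed.

Lemma bfZr p (M : 'M[R]_p) c a b : bf M a (c *: b) = c * bf M a b.
Proof. by rewrite /bf -scalemxAr mxE. Qed.

Lemma psdD p (M1 M2 : 'M[R]_p) : psd M1 -> psd M2 -> psd (M1 + M2).
Proof.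
move=> [s1 h1] [s2 h2]; split; first by rewrite linearD /= s1 s2.
by move=> v; rewrite qfDl addr_ge0.
Qed.

Lemma psd_congr p q (K : 'M[R]_(p, q)) (M : 'M[R]_p) : psd M -> psd (K^T *m M *m K).
Proof.
move=> [s h]; split; first by rewrite !trmx_mul trmxK s mulmxA.
by move=> v; rewrite qf_congr.
Qed.

Lemma pd_psd p (M : 'M[R]_p) : pd M -> psd M.
Proof.
move=> [s h]; split => // v; have [->|v0] := eqVneq v 0.
  by rewrite /qf mulmx0 mxE.
exact/ltW/h.
Qed.

Lemma pdD_psd p (M1 M2 : 'M[R]_p) : pd M1 -> psd M2 -> pd (M1 + M2).
Proof.
move=> [s1 h1] [s2 h2]; split; first by rewrite linearD /= s1 s2.
by move=> v v0; rewrite qfDl ltr_wpDr ?h1 ?h2.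
Qed.

Lemma pd_unitmx p (M : 'M[R]_p) : pd M -> M \in unitmx.
Proof.
move=> [_ h]; rewrite -row_free_unit -kermx_eq0; apply/eqP/row_matrixP => i.
rewrite row0; apply/eqP/negPn/negP => ri0.
have kerM : row i (kermx M) *m M = 0 by rewrite -row_mul mulmx_ker row0.
have := h (row i (kermx M))^T; rewrite -trmx0 (inj_eq trmx_inj) ri0.
by rewrite /qf trmxK kerM mul0mx mxE ltxx => /(_ isT).
Qed.

End QuadraticForm.

Section CompleteSquare.
Variables (R : realType) (n m : nat).
Variables (Q V A C : 'M[R]_n) (Rr : 'M[R]_m) (B D : 'M[R]_(n, m)).

Definition qcost (y : 'cV[R]_n) (v : 'cV[R]_m) : R :=
  qf Q y + qf Rr v + qf V (A *m y + B *m v) + qf V (C *m y + D *m v).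

Definition Hmx : 'M[R]_m := Rr + B^T *m V *m B + D^T *m V *m D.
Definition Kmx : 'M[R]_(m, n) := B^T *m V *m A + D^T *m V *m C.
Definition gain : 'M[R]_(m, n) := - invmx Hmx *m Kmx.

Lemma qcost_complete_square (F : 'M[R]_(m, n)) y e :
  Rr^T = Rr -> V^T = V -> Hmx *m F = - Kmx ->
  qcost y (F *m y + e) = qcost y (F *m y) + qf Hmx e.
Proof.
move=> sR sV HF; have Hz : Hmx *m (F *m y) + Kmx *m y = 0.
  by rewrite mulmxA HF mulNmx addNr.
set z := F *m y in Hz *; clearbody z.
have cross : z^T *m Rr *m e + (A *m y + B *m z)^T *m V *m (B *m e)
    + (C *m y + D *m z)^T *m V *m (D *m e) = (Hmx *m z + Kmx *m y)^T *m e.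
  rewrite /Hmx /Kmx !raddfD /= !trmx_mul !raddfD /= !trmx_mul !trmxK sR sV.
  rewrite !mulmxDl !mulmxA.
  by apply/matrixP => i j; rewrite !addmxE; lra.
rewrite /qcost !mulmxDr !addrA (qfD z) // (qfD (A *m y + B *m z)) //.
rewrite (qfD (C *m y + D *m z)) // /Hmx !qfDl !qf_congr.
move/(congr1 (fun X : 'M[R]_1 => X 0 0)): cross.
by rewrite Hz trmx0 mul0mx !addmxE [X in _ = X]mxE /bf; lra.
Qed.

Hypotheses (pdR : pd Rr) (psdV : psd V).

Lemma Hmx_pd : pd Hmx.
Proof. by do 2 (apply: pdD_psd; last exact: psd_congr). Qed.

Lemma qcost_gain y v : qcost y v = qcost y (gain *m y) + qf Hmx (v - gain *m y).
Proof.
rewrite -{1}(subrK (gain *m y) v) addrC.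
apply: qcost_complete_square; [by case: pdR | by case: psdV |].
by rewrite /gain mulmxA mulmxN mulmxV ?mulNmx ?mul1mx //; exact/pd_unitmx/Hmx_pd.
Qed.

Lemma qcost_gain_le y v : qcost y (gain *m y) <= qcost y v.
Proof. by rewrite (qcost_gain y v) lerDl; case: (pd_psd Hmx_pd). Qed.

Lemma qcost_gain_unique y v : qcost y v <= qcost y (gain *m y) -> v = gain *m y.
Proof.
rewrite (qcost_gain y v) gerDl => le0; apply/eqP; rewrite -subr_eq0.
by apply: contraLR le0 => /(proj2 Hmx_pd); rewrite ltNge.
Qed.

End CompleteSquare.

Section BackwardRecursion.
Variables (X : Type) (dflt : X) (N : nat) (F : nat -> (nat -> X) -> X).
Hypothesis F_local : forall s f g, (s < N)%N ->
  (forall l, (s < l < N)%N -> f l = g l) -> F s f = F s g.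

Fixpoint backward_rec (i : nat) : nat -> X :=
  match i with
  | 0 => fun _ => dflt
  | i'.+1 => fun l =>
      if l == (N - i'.+1)%N then F l (backward_rec i') else backward_rec i' l
  end.

Definition backward_sol := backward_rec N.

Lemma backward_rec_fix i l : (i <= N)%N -> (N - i <= l < N)%N ->
  backward_rec i l = F l (backward_rec i).
Proof.
elim: i l => [|i IH] l iN /andP[il lN]; first lia.
have recS l' : l' != (N - i.+1)%N -> backward_rec i.+1 l' = backward_rec i l'.
  by move=> /negbTE /= ->.
have F_recS l' : (N - i.+1 <= l' < N)%N ->
    F l' (backward_rec i) = F l' (backward_rec i.+1).
  move=> /andP[il' l'N]; apply: F_local => // l'' /andP[l'l'' l''N].
  by rewrite recS //; apply/eqP => E; lia.
have [{il}->|ne] := eqVneq l (N - i.+1)%N; first by rewrite /= eqxx F_recS //; lia.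
by rewrite recS // IH 1?F_recS //; lia.
Qed.

Lemma backward_sol_fix l : (l < N)%N -> backward_sol l = F l backward_sol.
Proof. by move=> lN; apply: backward_rec_fix; rewrite // subnn. Qed.

Lemma backward_fix_unique f : (forall l, (l < N)%N -> f l = F l f) ->
  forall l, (l < N)%N -> f l = backward_sol l.
Proof.
move=> f_fix.
suff agree i : (i <= N)%N -> forall l, (N - i <= l < N)%N -> f l = backward_sol l.
  by move=> l lN; apply: (agree N) => //; rewrite subnn.
elim: i => [|i IH] iN l /andP[il lN]; first lia.
have [{il lN}->|ne] := eqVneq l (N - i.+1)%N; last by apply: IH; lia.
have iN' : (N - i.+1 < N)%N by lia.
rewrite f_fix // backward_sol_fix //; apply: F_local => // l' /andP[il' l'N].
by apply: IH; lia.
Qed.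

End BackwardRecursion.

Section ConditionalMoments.
Context {d : measure_display} {T : measurableType d} {R : realType}.
Variables (mu : {measure set T -> \bar R}) (G : set (set T)).
Hypothesis sigmaG_measurable : forall A, <<s G>> A -> measurable A.
Local Notation TG := (g_sigma_algebraType G).

Lemma normr_funrpos (f : T -> R) x : `|f^\+ x| <= `|f x|.
Proof. by rewrite /funrpos maxEle; case: ifP; rewrite ?normr0 ?normr_ge0. Qed.

Lemma normr_funrneg (f : T -> R) x : `|f^\- x| <= `|f x|.
Proof. by rewrite /funrneg maxEle; case: ifP; rewrite ?normr0 ?normrN. Qed.

Lemma integrable_mul_le (g f h : T -> R) :
  measurable_fun setT g -> measurable_fun setT h -> (forall x, `|h x| <= `|f x|) ->
  mu.-integrable setT (fun x => (g x * f x)%:E) ->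
  mu.-integrable setT (fun x => (g x * h x)%:E).
Proof.
move=> mg mh hf igf; apply: le_integrable igf => //.
  exact/measurable_EFinP/measurable_funM.
by move=> x _; rewrite !abse_EFin lee_fin !normrM ler_wpM2l.
Qed.

Lemma integral_mul_funrposneg (g f : T -> R) :
  measurable_fun setT g -> measurable_fun setT f ->
  mu.-integrable setT (fun x => (g x * f x)%:E) ->
  (\int[mu]_x (g x * f x)%:E =
   \int[mu]_x (g x * f^\+ x)%:E - \int[mu]_x (g x * f^\- x)%:E)%E.
Proof.
move=> mg mf igf; rewrite -integralB_EFin //; last 2 first.
- exact: integrable_mul_le (measurable_funrpos mf) (normr_funrpos f) igf.
- exact: integrable_mul_le (measurable_funrneg mf) (normr_funrneg f) igf.
by apply: eq_integral => x _; rewrite -EFinB -mulrBr -[in LHS](funrposBneg f).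
Qed.

Lemma measurable_fun_sigma (h : T -> R) :
  @measurable_fun _ _ TG R setT h -> measurable_fun setT h.
Proof.
move=> mh _ B mB; rewrite setTI; apply: sigmaG_measurable.
by have := mh measurableT B mB; rewrite setTI.
Qed.

Import HBNNSimple.

Lemma integral_nnsfun_mul (f : T -> R) (s : {nnsfun TG >-> R}) :
  measurable_fun setT f -> (forall x, 0 <= f x) ->
  (\int[mu]_x (s x * f x)%:E =
   \sum_(y \in range s) y%:E * \int[mu]_(x in s @^-1` [set y]) (f x)%:E)%E.
Proof.
move=> mf f0.
have mS y : measurable ((s : TG -> R) @^-1` [set y] : set T).
  by apply: sigmaG_measurable; exact: (measurable_funPTI s (measurable_set1 y)).
have ms : measurable_fun setT (s : T -> R).
  exact/measurable_fun_sigma/measurable_funP.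
transitivity (\int[mu]_x (\sum_(y \in range s) (y * \1_(s @^-1` [set y]) x * f x)%:E))%E.
  apply: eq_integral => x _; rewrite fsumEFin //; congr EFin.
  by rewrite {1}fimfunE mulr_fsuml.
rewrite ge0_integral_fsum //; last 2 first.
- move=> y; apply/measurable_EFinP; apply: measurable_funM => //.
  by apply: measurable_funM => //; exact: measurable_indic.
- move=> y x _; rewrite lee_fin; apply: mulr_ge0 => //.
  rewrite /indic; case E: (_ \in _); rewrite ?mulr0 ?mulr1 //.
  by move: E => /set_mem /= <-.
apply: eq_fsbigr => y yr.
have y0 : 0 <= y by move: yr; rewrite inE => -[t _ <-].
under eq_integral do rewrite -mulrA EFinM.
rewrite ge0_integralZl //; last 2 first.
- by apply/measurable_EFinP; apply: measurable_funM => //; exact: measurable_indic.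
- by move=> x _; rewrite lee_fin mulr_ge0.
congr (_ * _)%E; rewrite [RHS]integral_mkcond; apply: eq_integral => x _.
by rewrite /patch /indic /=; case: (x \in _) => /=; rewrite ?mul1r ?mul0r.
Qed.

(* [f1f2] says E[f1 | sigma(G)] = E[f2 | sigma(G)], the form in which [mds]
   states the conditional moments of the noise. *)
Variables (f1 f2 : T -> R).
Hypotheses (mf1 : measurable_fun setT f1) (mf2 : measurable_fun setT f2).
Hypotheses (f1_ge0 : forall x, 0 <= f1 x) (f2_ge0 : forall x, 0 <= f2 x).
Hypothesis f1f2 : forall A, <<s G>> A ->
  (\int[mu]_(x in A) (f1 x)%:E = \int[mu]_(x in A) (f2 x)%:E)%E.

Lemma ge0_integral_mul_eq (h : T -> R) : (forall x, 0 <= h x) ->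
  @measurable_fun _ _ TG R setT h ->
  (\int[mu]_x (h x * f1 x)%:E = \int[mu]_x (h x * f2 x)%:E)%E.
Proof.
move=> h0 mh.
have mEh : @measurable_fun _ _ TG (\bar R) setT (EFin \o h) by exact/measurable_EFinP.
have mTG : measurable (setT : set TG) by [].
pose s := nnsfun_approx mTG mEh.
have lim_s (f : T -> R) : measurable_fun setT f -> (forall x, 0 <= f x) ->
    (\int[mu]_x (h x * f x)%:E = limn (fun k => \int[mu]_x (s k x * f x)%:E))%E.
  move=> mf f0; rewrite -monotone_convergence //; last 3 first.
  - move=> k; apply/measurable_EFinP; apply: measurable_funM => //.
    exact/measurable_fun_sigma/measurable_funP.
  - by move=> k x _; rewrite lee_fin mulr_ge0.
  - move=> x _ a b ab; rewrite lee_fin ler_wpM2r //.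
    by have /lefP := nd_nnsfun_approx mTG mEh ab; apply.
  apply: eq_integral => x _; apply/esym/cvg_lim => //.
  rewrite EFinM; under eq_fun do rewrite EFinM.
  apply: cvgeZr => //.
  have h0' (x' : TG) : setT x' -> (0 <= (EFin \o h) x')%E by rewrite /= lee_fin.
  exact: (@cvg_nnsfun_approx _ TG R [set: TG] mTG (EFin \o h) mEh h0' x Logic.I).
rewrite (lim_s f1) // (lim_s f2) //; congr (lim (_ @ \oo)); apply/funext => k.
rewrite !integral_nnsfun_mul //; apply: eq_fsbigr => y _; rewrite f1f2 //.
exact: (measurable_funPTI (s k) (measurable_set1 y)).
Qed.

Lemma integral_mul_eq (g : T -> R) : @measurable_fun _ _ TG R setT g ->
  mu.-integrable setT (fun x => (g x * f1 x)%:E) ->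
  mu.-integrable setT (fun x => (g x * f2 x)%:E) ->
  (\int[mu]_x (g x * f1 x)%:E = \int[mu]_x (g x * f2 x)%:E)%E.
Proof.
move=> mg i1 i2; have mgT := measurable_fun_sigma mg.
have swap (f h : T -> R) : (fun x => (h x * f x)%:E) = (fun x => (f x * h x)%:E).
  by apply/funext => x; rewrite mulrC.
rewrite (swap f1) (swap f2) in i1 i2 *.
rewrite (integral_mul_funrposneg mf1 mgT i1) (integral_mul_funrposneg mf2 mgT i2).
rewrite -(swap f1 g^\+) -(swap f2 g^\+) -(swap f1 g^\-) -(swap f2 g^\-).
by rewrite (ge0_integral_mul_eq (funrpos_ge0 g) (measurable_funrpos mg))
  (ge0_integral_mul_eq (funrneg_ge0 g) (measurable_funrneg mg)).
Qed.

End ConditionalMoments.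

Section SquareIntegrable.
Context {d : measure_display} {T : measurableType d} {R : realType}.
Variable mu : {finite_measure set T -> \bar R}.

Definition L2 (f : T -> R) :=
  measurable_fun setT f /\ mu.-integrable setT (fun o => (f o ^+ 2)%:E).

Definition L2v p (Y : T -> 'cV[R]_p) := forall i, L2 (fun o => Y o i 0).

Lemma L2_cst c : L2 (fun _ => c).
Proof.
split; first exact: measurable_cst.
exact: (finite_measure_integrable_cst mu _ measurableT).
Qed.

Lemma L2_integrableM f g : L2 f -> L2 g -> mu.-integrable setT (fun o => (f o * g o)%:E).
Proof.
move=> [mf if2] [mg ig2]; apply: le_integrable (integrableD measurableT if2 ig2) => //.
  exact/measurable_EFinP/measurable_funM.
move=> x _ /=; rewrite lee_fin [X in _ <= X]ger0_norm ?addr_ge0 ?sqr_ge0 // ler_norml.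
by have := sqr_ge0 (f x - g x); have := sqr_ge0 (f x + g x); rewrite !expr2 => *;
  apply/andP; split; nra.
Qed.

Lemma L2D f g : L2 f -> L2 g -> L2 (fun o => f o + g o).
Proof.
move=> [mf if2] [mg ig2]; split; first exact: measurable_funD.
have i2 h : mu.-integrable setT (fun o => (h o ^+ 2)%:E) ->
    mu.-integrable setT (fun o => (2 * h o ^+ 2)%:E).
  by move=> ih; under eq_fun do rewrite EFinM; exact: integrableZl.
apply: le_integrable (integrableD measurableT (i2 _ if2) (i2 _ ig2)) => //.
  by apply/measurable_EFinP; apply: measurable_funX; exact: measurable_funD.
move=> x _ /=; rewrite lee_fin ger0_norm ?sqr_ge0 // ger0_norm; last first.
  by rewrite addr_ge0 // mulr_ge0 // sqr_ge0.
by have := sqr_ge0 (f x - g x); rewrite !expr2; nra.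
Qed.

Lemma L2Z c f : L2 f -> L2 (fun o => c * f o).
Proof.
move=> [mf if2]; split; first by apply: measurable_funM => //; exact: measurable_cst.
by under eq_fun do rewrite exprMn EFinM; exact: integrableZl.
Qed.

Lemma L2_sum I (s : seq I) (F : I -> T -> R) :
  (forall i, L2 (F i)) -> L2 (fun o => \sum_(i <- s) F i o).
Proof.
move=> hF; elim: s => [|a s IH]; first by under eq_fun do rewrite big_nil; exact: L2_cst.
by under eq_fun do rewrite big_cons; exact: L2D.
Qed.

Lemma L2v_cst p (v : 'cV[R]_p) : L2v (fun _ => v).
Proof. by move=> i; exact: L2_cst. Qed.

Lemma L2vD p (Y Z : T -> 'cV[R]_p) : L2v Y -> L2v Z -> L2v (fun o => Y o + Z o).
Proof. by move=> hY hZ i; under eq_fun do rewrite addmxE; exact: L2D. Qed.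

Lemma L2v_mulmx q p (M : 'M[R]_(q, p)) Y : L2v Y -> L2v (fun o => M *m Y o).
Proof.
move=> hY i; under eq_fun do rewrite mxE.
by apply: L2_sum => j; exact: L2Z.
Qed.

Lemma integrable_bf p (M : 'M[R]_p) Y Z : L2v Y -> L2v Z ->
  mu.-integrable setT (fun o => (bf M (Y o) (Z o))%:E).
Proof.
move=> hY hZ; under eq_fun do rewrite bf_sum -sumEFin.
apply: integrable_sum => // j _; under eq_fun do rewrite -sumEFin.
apply: integrable_sum => // i _; under eq_fun do rewrite EFinM.
exact/integrableZl/L2_integrableM.
Qed.

Lemma integrable_qf p (M : 'M[R]_p) Y : L2v Y ->
  mu.-integrable setT (fun o => (qf M (Y o))%:E).
Proof. by move=> hY; exact: integrable_bf. Qed.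

Lemma integrable_qcost p q (Qc V A C : 'M[R]_p) (Rr : 'M[R]_q) (B D : 'M[R]_(p, q))
    (y : T -> 'cV[R]_p) (v : T -> 'cV[R]_q) : L2v y -> L2v v ->
  mu.-integrable setT (fun o => (qcost Qc V A C Rr B D (y o) (v o))%:E).
Proof.
move=> ly lv; have la := L2vD (L2v_mulmx A ly) (L2v_mulmx B lv).
have lb := L2vD (L2v_mulmx C ly) (L2v_mulmx D lv).
rewrite /qcost; under eq_fun do rewrite !EFinD.
by repeat apply: integrableD => //; apply: integrable_qf.
Qed.

End SquareIntegrable.

Section Noise.
Context {d : measure_display} {T : measurableType d} {R : realType}.
Variables (P : probability T R) (n : nat) (x0 : T -> 'cV[R]_n) (w : nat -> T -> R).
Hypotheses (x0_measurable : forall i : 'I_n, measurable_fun setT (fun o => x0 o i 0))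
  (w_mds : mds P x0 w).

Local Notation TG k := (g_sigma_algebraType (gen_prev x0 w k)).
Local Notation L2F k := (L2F_k P x0 w k).

Definition Fmeasurable k (f : T -> R) := @measurable_fun _ _ (TG k) R setT f.

Lemma Fprev_measurable k A : Fprev x0 w k A -> measurable A.
Proof.
apply: smallest_sub; first exact: sigma_algebra_measurable.
move=> B [[i [B' [_ mB' ->]]]|[l [B' [_ mB' ->]]]].
- by have := x0_measurable i measurableT mB'; rewrite setTI.
- by have [mw _ _ _ _] := w_mds l; have := mw measurableT B' mB'; rewrite setTI.
Qed.

Lemma Fmeasurable_measurable k f : Fmeasurable k f -> measurable_fun setT f.
Proof. exact: (measurable_fun_sigma (@Fprev_measurable k)). Qed.

Lemma FmeasP k f : Fmeas x0 w k f <-> Fmeasurable k f.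
Proof.
by split=> mf; [move=> _ B mB; rewrite setTI; exact: mf
               | move=> B mB; have := mf measurableT B mB; rewrite setTI].
Qed.

Lemma Fmeasurable_le k k' f : (k <= k')%N -> Fmeasurable k f -> Fmeasurable k' f.
Proof.
move=> kk' mf _ B mB; have := mf measurableT B mB; rewrite !setTI.
apply: sub_sigma_algebra2 => A [[i [B' [k0 mB' ->]]]|[l [B' [lk mB' ->]]]].
- by left; exists i, B'; split => //; exact: leq_trans kk'.
- by right; exists l, B'; split => //; exact: leq_trans kk'.
Qed.

Lemma Fmeasurable_noise k l : (l < k)%N -> Fmeasurable k (w l).
Proof.
by move=> lk _ B mB; rewrite setTI; apply: sub_sigma_algebra; right; exists l, B.
Qed.

Lemma Fmeasurable_bf k p (M : 'M[R]_p) (Y Z : T -> 'cV[R]_p) :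
  (forall i, Fmeasurable k (fun o => Y o i 0)) ->
  (forall i, Fmeasurable k (fun o => Z o i 0)) ->
  Fmeasurable k (fun o => bf M (Y o) (Z o)).
Proof.
move=> mY mZ; under eq_fun do rewrite bf_sum.
apply: measurable_sum => j; apply: measurable_sum => i.
by apply: measurable_funM; [exact: measurable_cst | exact: measurable_funM (mY i) (mZ j)].
Qed.

Lemma L2F_kP k p (Y : T -> 'cV[R]_p) :
  L2F k Y <-> (forall i, Fmeasurable k (fun o => Y o i 0)) /\ L2v P Y.
Proof.
split=> [[mY iY] | [mY lY]].
  have mY' i : Fmeasurable k (fun o => Y o i 0) by apply/FmeasP.
  by split=> // i; split; [exact: Fmeasurable_measurable | exact: iY].
by split=> i; [apply/FmeasP | case: (lY i)].
Qed.

Lemma L2F_cst k p (v : 'cV[R]_p) : L2F k (fun _ => v).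
Proof. by apply/L2F_kP; split=> [i|]; [exact: measurable_cst | exact: L2v_cst]. Qed.

Lemma L2FD k p (Y Z : T -> 'cV[R]_p) : L2F k Y -> L2F k Z -> L2F k (fun o => Y o + Z o).
Proof.
move=> /L2F_kP[mY lY] /L2F_kP[mZ lZ]; apply/L2F_kP; split; last exact: L2vD.
by move=> i; under eq_fun do rewrite addmxE; exact: measurable_funD (mY i) (mZ i).
Qed.

Lemma L2F_mulmx k q p (M : 'M[R]_(q, p)) Y : L2F k Y -> L2F k (fun o => M *m Y o).
Proof.
move=> /L2F_kP[mY lY]; apply/L2F_kP; split; last exact: L2v_mulmx.
move=> i; under eq_fun do rewrite mxE.
by apply: measurable_sum => j; apply: measurable_funM (mY j); exact: measurable_cst.
Qed.

Lemma L2F_le k k' p (Y : T -> 'cV[R]_p) : (k <= k')%N -> L2F k Y -> L2F k' Y.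
Proof.
move=> kk' /L2F_kP[mY lY]; apply/L2F_kP; split=> // i.
exact: Fmeasurable_le (mY i).
Qed.

Let noise_sq_cond l A : <<s gen_prev x0 w l>> A ->
  (\int[P]_(x in A) (w l x ^+ 2)%:E = \int[P]_(x in A) 1%:E)%E.
Proof.
move=> hA; have [_ _ _ _ w2] := w_mds l.
by rewrite w2 // integral_cst ?mul1e //; exact: Fprev_measurable hA.
Qed.

Let measurable_noise_sq l : measurable_fun setT (fun x => w l x ^+ 2).
Proof. by have [mw _ _ _ _] := w_mds l; exact: measurable_funX. Qed.

Lemma ge0_integral_mul_noise_sq l h : Fmeasurable l h -> (forall x, 0 <= h x) ->
  (\int[P]_x (h x * w l x ^+ 2)%:E = \int[P]_x (h x)%:E)%E.
Proof.
move=> mh h0.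
rewrite (ge0_integral_mul_eq (@Fprev_measurable l) (measurable_noise_sq l)
  (measurable_cst (1 : R)) (fun x => sqr_ge0 _) (fun _ => ler01) (@noise_sq_cond l)
  h0 mh).
by under eq_integral do rewrite mulr1.
Qed.

Lemma integrable_mul_noise_sq l h : Fmeasurable l h ->
  P.-integrable setT (fun x => (h x)%:E) ->
  P.-integrable setT (fun x => (h x * w l x ^+ 2)%:E).
Proof.
move=> mh /integrableP[_ ih]; apply/integrableP; split.
  by apply/measurable_EFinP/measurable_funM; [exact: Fmeasurable_measurable mh |].
under eq_integral do rewrite abse_EFin normrM [`|_ ^+ 2|]ger0_norm ?sqr_ge0 //.
rewrite ge0_integral_mul_noise_sq //.
by apply: measurableT_comp mh; exact: normr_measurable.
Qed.

Lemma integral_mul_noise_sq l h : Fmeasurable l h ->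
  P.-integrable setT (fun x => (h x)%:E) ->
  (\int[P]_x (h x * w l x ^+ 2)%:E = \int[P]_x (h x)%:E)%E.
Proof.
move=> mh ih.
rewrite (integral_mul_eq (@Fprev_measurable l) (measurable_noise_sq l)
  (measurable_cst (1 : R)) (fun x => sqr_ge0 _) (fun _ => ler01) (@noise_sq_cond l) mh).
- by under eq_integral do rewrite mulr1.
- exact: integrable_mul_noise_sq.
- by under eq_fun do rewrite mulr1.
Qed.

Lemma integral_mul_noise l g : Fmeasurable l g ->
  P.-integrable setT (fun x => (g x * w l x)%:E) ->
  (\int[P]_x (g x * w l x)%:E = 0)%E.
Proof.
move=> mg igw; have [mw iw w0 _ _] := w_mds l; have mgT := Fmeasurable_measurable mg.
have ip := integrable_mul_le mgT (measurable_funrpos mw) (normr_funrpos (w l)) igw.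
have ineg := integrable_mul_le mgT (measurable_funrneg mw) (normr_funrneg (w l)) igw.
have parts A : <<s gen_prev x0 w l>> A ->
    (\int[P]_(x in A) ((w l)^\+ x)%:E = \int[P]_(x in A) ((w l)^\- x)%:E)%E.
  move=> hA; have mA := Fprev_measurable hA.
  have iwA : P.-integrable A (EFin \o w l) := integrableS measurableT mA (subsetT _) iw.
  have := w0 A hA; rewrite -[w l in LHS](funrposBneg (w l)).
  rewrite (integralB_EFin mA (integrable_funrpos mA iwA) (integrable_funrneg mA iwA)).
  move/eqP; rewrite sube_eq ?add0e; first by move/eqP.
  + exact: integrable_fin_num (integrable_funrpos mA iwA).
  + by rewrite fin_num_adde_defl // integrable_fin_num // integrable_funrneg.
rewrite (integral_mul_funrposneg mgT mw igw).
rewrite (integral_mul_eq (@Fprev_measurable l) (measurable_funrpos mw)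
  (measurable_funrneg mw) (@funrpos_ge0 _ _ _) (@funrneg_ge0 _ _ _) parts mg ip ineg).
by rewrite subee // integrable_fin_num.
Qed.

Lemma L2F_noise l p (b : T -> 'cV[R]_p) : L2F l b -> L2F l.+1 (fun o => w l o *: b o).
Proof.
move=> /L2F_kP[mb lb]; have [mw _ _ _ _] := w_mds l.
have wbE i : (fun o => (w l o *: b o) i 0) = (fun o => w l o * b o i 0).
  by apply/funext => o; rewrite mxE.
apply/L2F_kP; split=> i; rewrite wbE.
  by apply: measurable_funM; [exact: Fmeasurable_noise | exact: Fmeasurable_le (mb i)].
have [mbi ibi] := lb i; split; first exact: measurable_funM.
under eq_fun do rewrite exprMn mulrC.
by apply: integrable_mul_noise_sq => //; exact: measurable_funX (mb i).
Qed.

Lemma L2F_step l p (a b : T -> 'cV[R]_p) :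
  L2F l a -> L2F l b -> L2F l.+1 (fun o => a o + w l o *: b o).
Proof. by move=> la lb; apply: L2FD; [exact: L2F_le la | exact: L2F_noise]. Qed.

Lemma integral_qf_noise l p (M : 'M[R]_p) (a b : T -> 'cV[R]_p) :
  M^T = M -> L2F l a -> L2F l b ->
  (\int[P]_o (qf M (a o + w l o *: b o))%:E =
   \int[P]_o (qf M (a o))%:E + \int[P]_o (qf M (b o))%:E)%E.
Proof.
move=> sM la lb; have /L2F_kP[ma La] := la; have /L2F_kP[mb Lb] := lb.
have /L2F_kP[_ Lwb] := L2F_noise lb.
have ibf : P.-integrable setT (fun o => (2 * bf M (a o) (w l o *: b o))%:E).
  by under eq_fun do rewrite EFinM; exact/integrableZl/integrable_bf.
under eq_integral do rewrite qfD // !EFinD.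
rewrite integralD //; last exact: integrableD (integrable_qf _ La) (integrable_qf _ Lwb).
rewrite integralD //; [|exact: integrable_qf..].
have -> : (\int[P]_o (qf M (w l o *: b o))%:E = \int[P]_o (qf M (b o))%:E)%E.
  under eq_integral do rewrite qfZ mulrC.
  by apply: integral_mul_noise_sq; [exact: Fmeasurable_bf | exact: integrable_qf].
suff -> : (\int[P]_o (2 * bf M (a o) (w l o *: b o))%:E = 0)%E by rewrite adde0.
have bfwE o : 2 * bf M (a o) (w l o *: b o) = 2 * bf M (a o) (b o) * w l o.
  by rewrite bfZr mulrCA mulrC.
under eq_integral do rewrite bfwE.
apply: integral_mul_noise; last by under eq_fun do rewrite -bfwE.
by apply: measurable_funM; [exact: measurable_cst | exact: Fmeasurable_bf].
Qed.

Lemma integral_qcost l p q (Qc V A C : 'M[R]_p) (Rr : 'M[R]_q) (B D : 'M[R]_(p, q))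
    (y : T -> 'cV[R]_p) (v : T -> 'cV[R]_q) :
  V^T = V -> L2F l y -> L2F l v ->
  (\int[P]_o (qf Qc (y o) + qf Rr (v o))%:E
   + \int[P]_o (qf V (A *m y o + B *m v o + w l o *: (C *m y o + D *m v o)))%:E
   = \int[P]_o (qcost Qc V A C Rr B D (y o) (v o))%:E)%E.
Proof.
move=> sV ly lv.
have la : L2F l (fun o => A *m y o + B *m v o) by apply: L2FD; exact: L2F_mulmx.
have lb : L2F l (fun o => C *m y o + D *m v o) by apply: L2FD; exact: L2F_mulmx.
have iqf k (M : 'M[R]_k) Z : L2F l Z -> P.-integrable setT (fun o => (qf M (Z o))%:E).
  by case/L2F_kP => _; exact: integrable_qf.
have iQR : P.-integrable setT (fun o => (qf Qc (y o) + qf Rr (v o))%:E).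
  under eq_fun do rewrite EFinD.
  by apply: integrableD => //; [exact: iqf ly | exact: iqf lv].
rewrite (integral_qf_noise sV la lb) /qcost.
under [RHS]eq_integral do rewrite 2!EFinD.
rewrite integralD //; [|exact: integrableD (iqf _ _ _ la) | exact: iqf lb].
by rewrite integralD // ?addeA //; exact: iqf la.
Qed.

Section LQ.
Variables (m N : nat) (A C : nat -> nat -> 'M[R]_n) (B D : nat -> nat -> 'M[R]_(n, m)).
Variables (Q : nat -> nat -> 'M[R]_n) (Rm : nat -> nat -> 'M[R]_m) (G : nat -> 'M[R]_n).
Hypotheses (Q_psd : forall t k, (t < N)%N -> (t <= k < N)%N -> psd (Q t k))
  (Rm_pd : forall t k, (t < N)%N -> (t <= k < N)%N -> pd (Rm t k))
  (G_psd : forall t, (t < N)%N -> psd (G t)).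

(* Indexed by the number of steps left before N, so that the recursion is
   structural. *)
Fixpoint value_rec (s : nat) (Phi : nat -> 'M[R]_(m, n)) (i : nat) : 'M[R]_n :=
  match i with
  | 0 => G s
  | i'.+1 =>
    let l := (N - i'.+1)%N in
    Q s l + (Phi l)^T *m Rm s l *m Phi l
    + (A s l + B s l *m Phi l)^T *m value_rec s Phi i' *m (A s l + B s l *m Phi l)
    + (C s l + D s l *m Phi l)^T *m value_rec s Phi i' *m (C s l + D s l *m Phi l)
  end.

Definition value_mx s Phi l := value_rec s Phi (N - l).

Definition spike_cost s Phi :=
  qcost (Q s s) (value_mx s Phi s.+1) (A s s) (C s s) (Rm s s) (B s s) (D s s).

Definition eq_gain s Phi : 'M[R]_(m, n) :=
  gain (value_mx s Phi s.+1) (A s s) (C s s) (Rm s s) (B s s) (D s s).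

Lemma value_mx_N s Phi : value_mx s Phi N = G s.
Proof. by rewrite /value_mx subnn. Qed.

Lemma qf_value_mx s Phi l x : (l < N)%N ->
  qf (value_mx s Phi l) x =
  qcost (Q s l) (value_mx s Phi l.+1) (A s l) (C s l) (Rm s l) (B s l) (D s l)
    x (Phi l *m x).
Proof.
move=> lN; rewrite /value_mx -(subnSK lN) /= subnSK // subKn 1?ltnW //.
by rewrite /qcost !qfDl !qf_congr !mulmxDl !mulmxA.
Qed.

Lemma value_rec_psd s Phi i : (s < N)%N -> (i <= N - s)%N -> psd (value_rec s Phi i).
Proof.
move=> sN; elim: i => [|i IH] iNs /=; first exact: G_psd.
have sl : (s <= N - i.+1 < N)%N by apply/andP; split; lia.
apply: psdD; last exact/psd_congr/IH/ltnW.
apply: psdD; last exact/psd_congr/IH/ltnW.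
by apply: psdD; [exact: Q_psd | exact/psd_congr/pd_psd/Rm_pd].
Qed.

Lemma value_mx_psd s Phi l : (s < N)%N -> (s <= l)%N -> psd (value_mx s Phi l).
Proof. by move=> sN sl; apply: value_rec_psd => //; lia. Qed.

Lemma value_rec_ext s Phi Psi i : (i <= N)%N ->
  (forall l, (N - i <= l < N)%N -> Phi l = Psi l) ->
  value_rec s Phi i = value_rec s Psi i.
Proof.
elim: i => [//|i IH] iN PhiPsi /=.
have -> : Phi (N - i.+1)%N = Psi (N - i.+1)%N.
  by apply: PhiPsi; apply/andP; split => //; lia.
by rewrite IH 1?ltnW // => l /andP[il lN]; apply: PhiPsi; apply/andP; split => //; lia.
Qed.

Lemma eq_gain_local s Phi Psi : (s < N)%N ->
  (forall l, (s < l < N)%N -> Phi l = Psi l) -> eq_gain s Phi = eq_gain s Psi.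
Proof.
move=> sN PhiPsi; rewrite /eq_gain /value_mx (@value_rec_ext s Phi Psi) ?leq_subr //.
by move=> l /andP[sl lN]; apply: PhiPsi; apply/andP; split => //; lia.
Qed.

Lemma path_L2F (Ac Cc : nat -> 'M[R]_n) (Bc Dc : nat -> 'M[R]_(n, m)) s y c u Phi :
  L2F s y -> L2F s u -> (forall o, c s (y o) o = u o) ->
  (forall l z o, (s < l)%N -> c l z o = Phi l *m z) ->
  forall j, L2F (s + j) (Defs.path Ac Cc Bc Dc w s y c j).
Proof.
move=> ly lu cs cl; elim=> [|j IH]; first by rewrite addn0.
have lc : L2F (s + j) (fun o => c (s + j)%N (Defs.path Ac Cc Bc Dc w s y c j o) o).
  case: j IH => [|j] IH.
    by rewrite addn0 (_ : (fun o => _) = u) //; apply/funext => o; exact: cs.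
  set X := Defs.path Ac Cc Bc Dc w s y c j.+1.
  rewrite (_ : (fun o => _) = fun o => Phi (s + j.+1)%N *m X o).
    exact: L2F_mulmx.
  by apply/funext => o; apply: cl; lia.
by rewrite addnS; apply: L2F_step; apply: L2FD; apply: L2F_mulmx.
Qed.

Section FeedbackCost.
Variables (s : nat) (Phi : nat -> 'M[R]_(m, n)) (y : T -> 'cV[R]_n).
Variables (c : nat -> 'cV[R]_n -> T -> 'cV[R]_m) (u : T -> 'cV[R]_m).
Hypotheses (sN : (s < N)%N) (ly : L2F s y) (lu : L2F s u)
  (c_s : forall o, c s (y o) o = u o)
  (c_feedback : forall l z o, (s < l)%N -> c l z o = Phi l *m z).

Local Notation X := (Defs.path (A s) (C s) (B s) (D s) w s y c).

Let value_sym l : (s <= l)%N -> (value_mx s Phi l)^T = value_mx s Phi l.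
Proof. by move=> sl; case: (value_mx_psd Phi sN sl). Qed.

Lemma cost_tail j : (0 < j <= N - s)%N ->
  ((\sum_(j <= i < N - s) \int[P]_o (qf (Q s (s + i)) (X i o)
       + qf (Rm s (s + i)) (c (s + i)%N (X i o) o))%:E)
   + \int[P]_o (qf (G s) (X (N - s)%N o))%:E
   = \int[P]_o (qf (value_mx s Phi (s + j)) (X j o))%:E)%E.
Proof.
move Er: (N - s - j)%N => r; elim: r j Er => [|r IH] j Er /andP[j0 jNs].
  have -> : j = (N - s)%N by lia.
  by rewrite big_geq // add0e subnKC ?value_mx_N // ltnW.
rewrite big_ltn; last lia.
rewrite -addeA (IH j.+1); [|lia|lia].
have lX := path_L2F (A s) (C s) (B s) (D s) ly lu c_s c_feedback j.
have cj o : c (s + j)%N (X j o) o = Phi (s + j)%N *m X j o by apply: c_feedback; lia.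
under eq_integral do rewrite cj.
set l := (s + j)%N; set Y := fun o => Phi l *m X j o.
rewrite (_ : (\int[P]_o _)%E = \int[P]_o (qf (value_mx s Phi l.+1)
    (A s l *m X j o + B s l *m Y o + w l o *: (C s l *m X j o + D s l *m Y o)))%:E)%E;
  last by apply: eq_integral => o _; rewrite /= cj addnS.
rewrite integral_qcost //; [|by apply: value_sym; lia | exact: L2F_mulmx].
by apply: eq_integral => o _; rewrite qf_value_mx //; lia.
Qed.

Lemma Jcost_feedback :
  Jcost P N A C B D Q Rm G w s y c = (\int[P]_o (spike_cost s Phi (y o) (u o))%:E)%E.
Proof.
rewrite /Jcost; set stage := fun i : nat => (\int[P]_o (qf (Q s (s + i)) (X i o)
  + qf (Rm s (s + i)) (c (s + i)%N (X i o) o))%:E)%E.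
rewrite -(big_mkord xpredT stage) big_ltn ?subn_gt0 // -addeA {}/stage.
rewrite (cost_tail (j := 1)); last by rewrite subn_gt0 sN.
rewrite addn1 -(integral_qcost (l := s)) //; last exact: value_sym.
congr (_ + _)%E; apply: eq_integral => o _; first by rewrite addn0 c_s.
by rewrite /= addn0 c_s.
Qed.

End FeedbackCost.

Lemma Jcost_strategy s Phi y : (s < N)%N -> L2F s y ->
  Jcost P N A C B D Q Rm G w s y (fun l z _ => Phi l *m z) =
  (\int[P]_o (spike_cost s Phi (y o) (Phi s *m y o))%:E)%E.
Proof. by move=> sN ly; apply: Jcost_feedback => //; exact: L2F_mulmx. Qed.

Lemma Jcost_spike s Phi y u : (s < N)%N -> L2F s y -> L2F s u ->
  Jcost P N A C B D Q Rm G w s y (fun l z o => if l == s then u o else Phi l *m z) =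
  (\int[P]_o (spike_cost s Phi (y o) (u o))%:E)%E.
Proof.
move=> sN ly lu; apply: Jcost_feedback => //.
- by move=> o; rewrite eqxx.
- by move=> l z o sl; rewrite gtn_eqF.
Qed.

Lemma spike_cost_gain_le s Phi y v : (s < N)%N ->
  spike_cost s Phi y (eq_gain s Phi *m y) <= spike_cost s Phi y v.
Proof.
move=> sN; apply: qcost_gain_le; first by apply: Rm_pd; rewrite ?leqnn.
exact: value_mx_psd.
Qed.

Lemma equilibrium_of_fix Phi : (forall l, (l < N)%N -> Phi l = eq_gain l Phi) ->
  equilibrium P N x0 w A C B D Q Rm G Phi.
Proof.
move=> Phi_fix t x tN k /andP[tk kN] u lu; cbv zeta.
set Xs := Defs.path _ _ _ _ _ _ _ _ (k - t)%N.
have lX : L2F k Xs.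
  have := path_L2F (fun l => A l l) (fun l => C l l) (fun l => B l l)
    (fun l => D l l) (L2F_cst t x) (L2F_cst t (Phi t *m x)) (fun _ => erefl)
    (fun _ _ _ _ => erefl) (k - t).
  by rewrite subnKC.
rewrite Jcost_strategy // Jcost_spike //.
have /L2F_kP[_ LX] := lX; have /L2F_kP[_ Lu] := lu.
apply: le_integral => //; [exact: integrable_qcost (L2v_mulmx _ LX) |
  exact: integrable_qcost |].
by move=> o _; rewrite lee_fin Phi_fix // spike_cost_gain_le.
Qed.

Lemma equilibrium_fix Psi : equilibrium P N x0 w A C B D Q Rm G Psi ->
  forall s, (s < N)%N -> Psi s = eq_gain s Psi.
Proof.
move=> Psi_eq s sN; apply/trmx_inj/eqP/mulmxP => xT.
rewrite -[xT]trmxK -!trmx_mul; congr trmx; move: xT^T => x.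
have P1 : (P : {measure set T -> \bar R}) setT = 1%E := probability_setT P.
have ss : (s <= s < N)%N by rewrite leqnn.
have := Psi_eq s x sN s ss (fun _ => eq_gain s Psi *m x) (L2F_cst _ _); cbv zeta.
rewrite subnn; change (Defs.path _ _ _ _ _ _ _ _ 0) with (fun _ : T => x).
rewrite Jcost_strategy ?Jcost_spike //; try exact: L2F_cst.
rewrite !integral_cst // P1 !mule1 lee_fin.
apply: qcost_gain_unique; [by apply: Rm_pd; rewrite ?leqnn | exact: value_mx_psd].
Qed.

End LQ.

End Noise.

Theorem corollary3p1 (d : measure_display) (T : measurableType d) (R : realType)
  (P : probability T R) (n m N : nat)
  (x0 : T -> 'cV[R]_n) (w : nat -> T -> R)
  (A C : nat -> nat -> 'M[R]_n) (B D : nat -> nat -> 'M[R]_(n, m))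
  (Q : nat -> nat -> 'M[R]_n) (Rm : nat -> nat -> 'M[R]_m) (G : nat -> 'M[R]_n) :
  (0 < N)%N ->
  (forall i : 'I_n, measurable_fun setT (fun o => x0 o i 0)) ->
  mds P x0 w ->
  (forall t k : nat, (t < N)%N -> (t <= k < N)%N -> psd (Q t k)) ->
  (forall t k : nat, (t < N)%N -> (t <= k < N)%N -> pd (Rm t k)) ->
  (forall t : nat, (t < N)%N -> psd (G t)) ->
  exists Phi : nat -> 'M[R]_(m, n),
    equilibrium P N x0 w A C B D Q Rm G Phi /\
    forall Psi : nat -> 'M[R]_(m, n),
      equilibrium P N x0 w A C B D Q Rm G Psi ->
      forall t : nat, (t < N)%N -> Psi t = Phi t.
Proof.
move=> _ x0_measurable w_mds Q_psd Rm_pd G_psd.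
have gain_local := @eq_gain_local R n m N A C B D Q Rm G.
exists (backward_sol 0 N (eq_gain N A C B D Q Rm G)); split.
  apply: (equilibrium_of_fix x0_measurable w_mds Q_psd Rm_pd G_psd) => l lN.
  exact: backward_sol_fix.
move=> Psi Psi_eq t tN; apply: backward_fix_unique => //.
exact: (equilibrium_fix x0_measurable w_mds Q_psd Rm_pd G_psd Psi_eq).
Qed.
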